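(* Let $u^1_{2n}$ denote the coefficient of $a^2$ in the Taylor expansion $u_{2n}(a)=u^0_{2n}+u^1_{2n}a^2+u^2_{2n}a^4+O(a^6)$ at $a=0$. Then $$u^1_2=-1,\qquad u^1_4=-\frac{15}{16},\qquad u^1_{2n}=-\frac{61}{12^2}\,\frac{(n+1)^2}{2^n}\quad(n\ge3).$$
   Context: The rational functions $u_{2n}(a)$ (which depend on $a$ only through $a^2$) are defined by $(a^2+1)u_2=1$ and, for $n\ge2$, $(a^2+n^2)u_{2n}=3u_{2(n-1)}+3\sum_{j_1+j_2=n-1}u_{2j_1}u_{2j_2}+\sum_{j_1+j_2+j_3=n-1}u_{2j_1}u_{2j_2}u_{2j_3}-\sum_{1\le j_1,\,2j_1<n}(n-2j_1)^2u_{2j_1}u_{2(n-j_1)}$, all indices $j_i\ge1$. *)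

From mathcomp Require Import all_boot all_order all_algebra.
Set Implicit Arguments. Unset Strict Implicit. Unset Printing Implicit Defensive.
Import Order.TTheory GRing.Theory Num.Theory.
Local Open Scope ring_scope.

Section U.
Variable R : realFieldType.

(* Given s = [:: u_2(a); u_4(a); ...; u_{2(n-1)}(a)], compute u_{2n}(a). *)
Definition unext (n : nat) (s : seq R) (a : R) : R :=
  let U j := nth 0 s j.-1 in
  if n == 1%N then (a ^+ 2 + 1)^-1
  else
   (3 * U n.-1
    + 3 * (\sum_(1 <= j1 < n.-1) U j1 * U (n.-1 - j1)%N)
    + (\sum_(1 <= j1 < n.-1) \sum_(1 <= j2 < n.-1 - j1)
          U j1 * U j2 * U (n.-1 - j1 - j2)%N)
    - (\sum_(1 <= j1 < n | (2 * j1 < n)%N)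
          ((n - 2 * j1)%N ^ 2)%:R * U j1 * U (n - j1)%N))
   / (a ^+ 2 + (n ^ 2)%:R).

Fixpoint ulist (n : nat) (a : R) : seq R :=
  match n with
  | 0 => [::]
  | n'.+1 => let s := ulist n' a in rcons s (unext n'.+1 s a)
  end.

(* u n a = u_{2n}(a), for n >= 1 *)
Definition u (n : nat) (a : R) : R := nth 0 (ulist n a) n.-1.

Definition a2_coeff (f : R -> R) (c : R) : Prop :=
  exists c0 c2 C delta : R, 0 < delta /\
    forall a : R, `|a| < delta ->
      `|f a - (c0 + c * a ^+ 2 + c2 * a ^+ 4)| <= C * `|a| ^+ 6.

End U.

(* Expansions [c0 + c1 a^2 + c2 a^4 + O(a^6)] at [a = 0] are stable under sums,
   products and division by [a^2 + m] with [m > 0].  As [(a^2 + n^2) u_{2n}] is a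
   cubic polynomial [F_n] in [u_2, ..., u_{2n-2}], strong induction shows that
   every [u_{2n}] has such an expansion, and that its coefficients satisfy
   [n^2 u^0_{2n} = F_n(u^0)] and [u^0_{2n} + n^2 u^1_{2n} = DF_n(u^0)[u^1]].
   It remains to check that [u^0_{2n} = (n+1)/2^n] and the claimed [u^1_{2n}]
   solve these two recurrences.  Once the last sum of [F_n] is symmetrized, every
   convolution that occurs is a polynomial in [n] times [2^-n], which is
   evaluated in closed form by telescoping. *)

From mathcomp Require Import all_boot all_order all_algebra.
From mathcomp Require Import ring zify.
Import Order.TTheory GRing.Theory Num.Theory.
Local Open Scope ring_scope.
Set Implicit Arguments. Unset Strict Implicit. Unset Printing Implicit Defensive.

Section Expansion.
Variable R : realFieldType.
Implicit Types (P Q : R -> Prop) (e f g : R -> R).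

Definition near0 P := exists d : R, 0 < d /\ forall a, `|a| < d -> P a.

Definition bigO6 e := exists C : R, near0 (fun a => `|e a| <= C * `|a| ^+ 6).

Definition bounded_near0 e := exists M : R, near0 (fun a => `|e a| <= M).

Definition has_expansion f (c0 c1 : R) :=
  exists c2, bigO6 (fun a => f a - (c0 + c1 * a ^+ 2 + c2 * a ^+ 4)).

Lemma near0W P Q : near0 P -> (forall a, P a -> Q a) -> near0 Q.
Proof. by move=> [d [d0 hP]] PQ; exists d; split=> // a /hP /PQ. Qed.

Lemma near0_and P Q : near0 P -> near0 Q -> near0 (fun a => P a /\ Q a).
Proof.
move=> [d [d0 hP]] [d' [d'0 hQ]]; exists (Num.min d d').
split=> [|a]; first by rewrite lt_min d0 d'0.
by rewrite lt_min => /andP[/hP ? /hQ ?].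
Qed.

Lemma near0_norm_le1 : near0 (fun a : R => `|a| <= 1).
Proof. by exists 1; split=> [|a /ltW]. Qed.

Lemma eq_bigO6 e e' : e =1 e' -> bigO6 e -> bigO6 e'.
Proof. by move=> ee' [C hC]; exists C; apply: (near0W hC) => a; rewrite ee'. Qed.

Lemma bigO6D e e' : bigO6 e -> bigO6 e' -> bigO6 (fun a => e a + e' a).
Proof.
move=> [C hC] [C' hC']; exists (C + C').
apply: (near0W (near0_and hC hC')) => a [ha ha'].
by rewrite mulrDl; apply: le_trans (ler_normD _ _) (lerD ha ha').
Qed.

Lemma bigO6Mr e g : bigO6 e -> bounded_near0 g -> bigO6 (fun a => e a * g a).
Proof.
move=> [C hC] [M hM]; exists (C * M).
apply: (near0W (near0_and hC hM)) => a [ha hg].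
by rewrite normrM mulrAC; apply: ler_pM => //; apply: le_trans ha.
Qed.

Lemma bigO6_monomial (c : R) k : (6 <= k)%N -> bigO6 (fun a => c * a ^+ k).
Proof.
move=> k6; exists `|c|; apply: (near0W near0_norm_le1) => a a1.
rewrite normrM normrX -(subnKC k6) exprD ler_wpM2l // -[leRHS]mulr1.
by rewrite ler_wpM2l ?exprn_ge0 ?exprn_ile1.
Qed.

Lemma bigO6_bounded e : bigO6 e -> bounded_near0 e.
Proof.
move=> [C hC]; exists `|C|.
apply: (near0W (near0_and hC near0_norm_le1)) => a [ha a1].
apply: (le_trans ha); apply: (le_trans (ler_wpM2r _ (ler_norm C))).
  exact: exprn_ge0.
by rewrite -[leRHS]mulr1 ler_wpM2l ?exprn_ile1.
Qed.

Lemma bounded_near0D e e' :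
  bounded_near0 e -> bounded_near0 e' -> bounded_near0 (fun a => e a + e' a).
Proof.
move=> [M hM] [M' hM']; exists (M + M').
apply: (near0W (near0_and hM hM')) => a [ha ha'].
by apply: le_trans (ler_normD _ _) (lerD ha ha').
Qed.

Lemma bounded_near0_cst (c : R) : bounded_near0 (fun=> c).
Proof. by exists `|c|; apply: (near0W near0_norm_le1). Qed.

Lemma bounded_near0_poly (c0 c1 c2 : R) :
  bounded_near0 (fun a => c0 + c1 * a ^+ 2 + c2 * a ^+ 4).
Proof.
have monomial k (c : R) : bounded_near0 (fun a => c * a ^+ k).
  exists `|c|; apply: (near0W near0_norm_le1) => a a1.
  by rewrite normrM normrX -[leRHS]mulr1 ler_wpM2l ?exprn_ile1.
apply: (bounded_near0D (e := fun a => c0 + c1 * a ^+ 2)) (monomial 4%N c2).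
exact: (bounded_near0D (bounded_near0_cst c0) (monomial 2%N c1)).
Qed.

Lemma bounded_near0_inv_sqrD (m : R) :
  0 < m -> bounded_near0 (fun a => (a ^+ 2 + m)^-1).
Proof.
move=> m0; exists m^-1; apply: (near0W near0_norm_le1) => a _.
have am : 0 < a ^+ 2 + m by rewrite ltr_wpDl ?sqr_ge0.
by rewrite normfV gtr0_norm // lef_pV2 ?posrE // lerDr sqr_ge0.
Qed.

Lemma eq_has_expansion f g (c0 c1 : R) :
  f =1 g -> has_expansion f c0 c1 -> has_expansion g c0 c1.
Proof. by move=> fg [c2 hf]; exists c2; apply: (eq_bigO6 _ hf) => a; rewrite fg. Qed.

Lemma has_expansion_bounded f (c0 c1 : R) : has_expansion f c0 c1 -> bounded_near0 f.
Proof.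
case=> c2 /bigO6_bounded /bounded_near0D /(_ (bounded_near0_poly c0 c1 c2)) [M hM].
by exists M; apply: (near0W hM) => a; rewrite subrK.
Qed.

Lemma has_expansion_cst (k : R) : has_expansion (fun=> k) k 0.
Proof.
by exists 0; apply: (eq_bigO6 _ (bigO6_monomial 0 (leqnn 6))) => a /=; ring.
Qed.

Lemma has_expansionD f g (a0 a1 b0 b1 : R) :
  has_expansion f a0 a1 -> has_expansion g b0 b1 ->
  has_expansion (fun a => f a + g a) (a0 + b0) (a1 + b1).
Proof.
move=> [a2 hf] [b2 hg]; exists (a2 + b2).
by apply: (eq_bigO6 _ (bigO6D hf hg)) => a /=; ring.
Qed.

Lemma has_expansionZ (k : R) f (a0 a1 : R) :
  has_expansion f a0 a1 -> has_expansion (fun a => k * f a) (k * a0) (k * a1).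
Proof.
move=> [a2 hf]; exists (k * a2).
by apply: (eq_bigO6 _ (bigO6Mr hf (bounded_near0_cst k))) => a /=; ring.
Qed.

Lemma has_expansionB f g (a0 a1 b0 b1 : R) :
  has_expansion f a0 a1 -> has_expansion g b0 b1 ->
  has_expansion (fun a => f a - g a) (a0 - b0) (a1 - b1).
Proof.
move=> [a2 hf] [b2 hg]; exists (a2 - b2).
have := bigO6D hf (bigO6Mr hg (bounded_near0_cst (-1))).
by apply: eq_bigO6 => a /=; ring.
Qed.

Lemma has_expansionM f g (a0 a1 b0 b1 : R) :
  has_expansion f a0 a1 -> has_expansion g b0 b1 ->
  has_expansion (fun a => f a * g a) (a0 * b0) (a0 * b1 + a1 * b0).
Proof.
move=> hf hg; have gb := has_expansion_bounded hg.
case: hf hg => a2 hf [b2 hg]; exists (a0 * b2 + a1 * b1 + a2 * b0).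
have high := bigO6D (bigO6_monomial (a1 * b2 + a2 * b1) (leqnn 6))
                    (bigO6_monomial (a2 * b2) (isT : 6 <= 8)%N).
have low := bigO6D (bigO6Mr hf gb) (bigO6Mr hg (bounded_near0_poly a0 a1 a2)).
by apply: (eq_bigO6 _ (bigO6D low high)) => a /=; ring.
Qed.

Lemma has_expansion_div_sqrD g (m r0 r1 q0 q1 : R) : 0 < m ->
  r0 = m * q0 -> r1 = q0 + m * q1 -> has_expansion g r0 r1 ->
  has_expansion (fun a => g a / (a ^+ 2 + m)) q0 q1.
Proof.
move=> m0 -> -> [r2 hg]; set q2 := (r2 - q1) / m; exists q2.
have := bigO6Mr (bigO6D hg (bigO6_monomial (- q2) (leqnn 6)))
                (bounded_near0_inv_sqrD m0).
apply: eq_bigO6 => a /=; rewrite /q2; field.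
have am : 0 < a ^+ 2 + m by rewrite ltr_wpDl ?sqr_ge0.
by rewrite !gt_eqF.
Qed.

Lemma has_expansion_sum (I : eqType) (r : seq I) (F : I -> R -> R) (c0 c1 : I -> R) :
  (forall i, i \in r -> has_expansion (F i) (c0 i) (c1 i)) ->
  has_expansion (fun a => \sum_(i <- r) F i a)
    (\sum_(i <- r) c0 i) (\sum_(i <- r) c1 i).
Proof.
elim: r => [|i r IH] hF.
  rewrite !big_nil; apply: (eq_has_expansion _ (has_expansion_cst 0)) => a.
  by rewrite big_nil.
rewrite !big_cons.
apply: (eq_has_expansion _ (has_expansionD (hF i (mem_head _ _)) (IH _))) => [a|].
  by rewrite big_cons.
by move=> j jr; apply: hF; rewrite in_cons jr orbT.
Qed.

End Expansion.

Section Convolution.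
Variable R : realFieldType.
Implicit Types f g k : nat -> R.

Definition conv f g (s : nat) : R := \sum_(1 <= j < s) f j * g (s - j)%N.

Definition weight (n j : nat) : R := (n%:R - 2 * j%:R) ^+ 2.

Definition wconv (n : nat) f g : R :=
  \sum_(1 <= j < n) f j * (weight n j * g (n - j)%N).

Lemma sum_nat_rev s (F : nat -> R) :
  \sum_(1 <= j < s) F j = \sum_(1 <= j < s) F (s - j)%N.
Proof.
by rewrite big_nat_rev; apply: eq_big_nat => j _; rewrite add1n subSS.
Qed.

Lemma sum_nat_half n (F : nat -> R) :
  (forall j, (0 < j < n)%N -> F (n - j)%N = F j) ->
  (forall j, (2 * j = n)%N -> F j = 0) ->
  \sum_(1 <= j < n | (2 * j < n)%N) F j = 2^-1 * \sum_(1 <= j < n) F j.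
Proof.
move=> Fsym Fmid; rewrite [in RHS](bigID (fun j => (2 * j < n)%N)) /=.
suff -> : \sum_(1 <= j < n | ~~ (2 * j < n)%N) F j =
          \sum_(1 <= j < n | (2 * j < n)%N) F j by field.
rewrite big_nat_rev big_nat_cond.
rewrite (eq_big (fun j => (1 <= j < n)%N && (2 * j <= n)%N) F); first last.
- by move=> j /andP[hj _]; rewrite add1n subSS Fsym //; lia.
- by move=> j; lia.
rewrite (bigID (fun j => (2 * j < n)%N)) /= [X in _ + X]big1 ?addr0.
  by rewrite [RHS]big_nat_cond; apply: eq_bigl => j; lia.
by move=> j hj; apply: Fmid; lia.
Qed.

Lemma exchange_big_triangle s (F : nat -> nat -> R) :
  \sum_(1 <= i < s) \sum_(1 <= j < s - i) F i j =
  \sum_(1 <= j < s) \sum_(1 <= i < s - j) F i j.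
Proof.
have widen i (G : nat -> R) :
    \sum_(1 <= j < s - i) G j = \sum_(1 <= j < s | (i + j < s)%N) G j.
  rewrite (big_nat_widen _ _ _ _ _ (leq_subr i s)) big_nat_cond [RHS]big_nat_cond.
  by apply: eq_bigl => j; congr (_ && _); lia.
rewrite (eq_bigr _ (fun i _ => widen i _)).
rewrite (exchange_big_dep_nat xpredT) //=; apply: eq_bigr => j _.
by rewrite widen; apply: eq_bigl => i; rewrite addnC.
Qed.

Lemma convC f g s : conv f g s = conv g f s.
Proof.
rewrite /conv sum_nat_rev; apply: eq_big_nat => j /andP[_ js].
by rewrite mulrC subKn // ltnW.
Qed.

Lemma convCA f g k s : conv f (conv g k) s = conv g (conv f k) s.
Proof.
rewrite /conv; under eq_bigr do rewrite mulr_sumr.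
rewrite exchange_big_triangle; apply: eq_bigr => j _; rewrite mulr_sumr.
by apply: eq_bigr => i _; rewrite mulrCA subnAC.
Qed.

Lemma weight_sym n j : (j <= n)%N -> weight n (n - j) = weight n j.
Proof. by move=> jn; rewrite /weight natrB //; ring. Qed.

Lemma wconvC n f g : wconv n f g = wconv n g f.
Proof.
rewrite /wconv sum_nat_rev; apply: eq_big_nat => j /andP[_ /ltnW jn].
by rewrite subKn // weight_sym //; ring.
Qed.

Lemma has_expansion_conv s (F G : nat -> R -> R) (x0 x1 y0 y1 : nat -> R) :
  (forall j, (0 < j < s)%N -> has_expansion (F j) (x0 j) (x1 j)) ->
  (forall j, (0 < j < s)%N -> has_expansion (G j) (y0 j) (y1 j)) ->
  has_expansion (fun a => conv (F^~ a) (G^~ a) s)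
    (conv x0 y0 s) (conv x0 y1 s + conv x1 y0 s).
Proof.
move=> hF hG; rewrite /conv -big_split /=.
apply: has_expansion_sum => j; rewrite mem_index_iota => hj.
by apply: has_expansionM; [apply: hF | apply: hG]; lia.
Qed.

Lemma has_expansion_wconv n (F G : nat -> R -> R) (x0 x1 y0 y1 : nat -> R) :
  (forall j, (0 < j < n)%N -> has_expansion (F j) (x0 j) (x1 j)) ->
  (forall j, (0 < j < n)%N -> has_expansion (G j) (y0 j) (y1 j)) ->
  has_expansion (fun a => wconv n (F^~ a) (G^~ a))
    (wconv n x0 y0) (wconv n x0 y1 + wconv n x1 y0).
Proof.
move=> hF hG; rewrite /wconv -big_split /=.
apply: has_expansion_sum => j; rewrite mem_index_iota => hj.
by apply: has_expansionM; [apply: hF | apply/has_expansionZ/hG]; lia.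
Qed.

End Convolution.

Section Recursion.
Variable R : realFieldType.
Implicit Types g : nat -> R.

Definition rhs (n : nat) g : R :=
  3 * g n.-1 + 3 * conv g g n.-1 + conv g (conv g g) n.-1 - 2^-1 * wconv n g g.

(* The derivative of [rhs n] at [z0] in the direction [z1]: the coefficient of
   [a^2] in [rhs n (z0 + a^2 z1 + ...)]. *)
Definition drhs (n : nat) (z0 z1 : nat -> R) : R :=
  3 * z1 n.-1 + 3 * (conv z0 z1 n.-1 + conv z1 z0 n.-1)
  + (conv z0 (fun k => conv z0 z1 k + conv z1 z0 k) n.-1 + conv z1 (conv z0 z0) n.-1)
  - 2^-1 * (wconv n z0 z1 + wconv n z1 z0).

Lemma drhsE n (z0 z1 : nat -> R) : drhs n z0 z1 =
  3 * z1 n.-1 + 6 * conv z1 z0 n.-1 + 3 * conv z1 (conv z0 z0) n.-1 - wconv n z1 z0.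
Proof.
have convD f g g' s : conv f (fun k => g k + g' k) s = conv f g s + conv f g' s.
  by rewrite /conv -big_split; apply: eq_bigr => j _; rewrite mulrDr.
rewrite /drhs (convC z0 z1) (wconvC n z0) convD (convCA z1).
have -> : conv z0 (conv z0 z1) n.-1 = conv z0 (conv z1 z0) n.-1.
  by apply: eq_bigr => j _; rewrite convC.
by field.
Qed.

Lemma has_expansion_rhs n (F : nat -> R -> R) (z0 z1 : nat -> R) : (2 <= n)%N ->
  (forall j, (0 < j < n)%N -> has_expansion (F j) (z0 j) (z1 j)) ->
  has_expansion (fun a => rhs n (F^~ a)) (rhs n z0) (drhs n z0 z1).
Proof.
move=> n2 hF.
have hFlt s : (s <= n)%N ->
    forall j, (0 < j < s)%N -> has_expansion (F j) (z0 j) (z1 j).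
  by move=> sn j hj; apply: hF; lia.
have hconv s (sn : (s <= n)%N) := has_expansion_conv (hFlt s sn) (hFlt s sn).
have hm : (0 < n.-1 < n)%N by lia.
have hm' : (n.-1 <= n)%N by lia.
have hk_le k : (0 < k < n.-1)%N -> (k <= n)%N by lia.
have hconv3 := has_expansion_conv (hFlt _ hm') (fun k hk => hconv k (hk_le k hk)).
exact: has_expansionB (has_expansionD (has_expansionD
    (has_expansionZ 3 (hF _ hm)) (has_expansionZ 3 (hconv _ hm'))) hconv3)
  (has_expansionZ 2^-1 (has_expansion_wconv hF hF)).
Qed.

Lemma size_ulist n (a : R) : size (ulist n a) = n.
Proof. by elim: n => //= n IH; rewrite size_rcons IH. Qed.

Lemma nth_ulist n (a : R) j : (0 < j <= n)%N -> nth 0 (ulist n a) j.-1 = u j a.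
Proof.
case: j => // j /andP[_]; elim: n => // n IH jn /=.
rewrite nth_rcons size_ulist; case: (ltngtP j n) => [jn'|nj|->]; first exact: IH.
  by move: jn; rewrite ltnS leqNgt nj.
by rewrite /u /= nth_rcons size_ulist ltnn eqxx.
Qed.

Lemma u_base (a : R) : u 1 a = (a ^+ 2 + 1)^-1.
Proof. by []. Qed.

Lemma u_rec n (a : R) : (2 <= n)%N ->
  u n a = rhs n (fun j => u j a) / (a ^+ 2 + (n ^ 2)%:R).
Proof.
case: n => // n n2; rewrite {1}/u /= nth_rcons size_ulist ltnn eqxx /unext /=.
rewrite ifN //; last by case: n n2.
congr (_ / _); rewrite /rhs /conv nth_ulist /=; last lia.
congr (_ + _ + _ - _).
- by congr (_ * _); apply: eq_big_nat => i hi; rewrite !nth_ulist //; lia.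
- apply: eq_big_nat => i hi; rewrite mulr_sumr; apply: eq_big_nat => j hj.
  by rewrite mulrA !nth_ulist //; lia.
rewrite /wconv -sum_nat_half => [|j hj|j hj].
- rewrite big_nat_cond [RHS]big_nat_cond; apply: eq_bigr => j /andP[hj hj2].
  by rewrite /weight natrX natrB ?natrM ?nth_ulist //; [ring | lia..].
- have jn : (j <= n.+1)%N by case/andP: hj => _ /ltnW.
  by rewrite subKn // weight_sym //; ring.
by rewrite /weight -hj natrM; ring.
Qed.

End Recursion.

Section Coefficients.
Variable R : realFieldType.
Let h : R := 2^-1.

Definition u0 (n : nat) : R := (n%:R + 1) * h ^+ n.

Definition u1 (n : nat) : R :=
  if n == 1%N then -1 else if n == 2%N then - (15%:R / 16%:R)
  else - (61%:R / (12%:R ^+ 2)) * ((n + 1)%N ^ 2)%:R / (2%:R ^+ n).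

Definition u1_gen (n : nat) : R := - (61 / 144) * (n%:R + 1) ^+ 2 * h ^+ n.

Lemma expr_split (x : R) k s : (k <= s)%N -> x ^+ s = x ^+ k * x ^+ (s - k).
Proof. by move=> ks; rewrite -exprD subnKC. Qed.

(* Each summand below is [p j * h ^+ s] for a polynomial [p], and [P] is an
   antidifference of [p]. *)
Lemma conv_u0_u0 s : (1 <= s)%N ->
  conv u0 u0 s = (s%:R - 1) * (s%:R + 1) * (s%:R + 6) / 6 * h ^+ s.
Proof.
move=> s1; set S : R := s%:R.
pose P x := (- 2*x^+3 + 3*x^+2*S + 3*x^+2 + 3*x*S + 5*x) / 6.
rewrite /conv (telescope_sumr_eq (fun j => P j%:R * h ^+ s)) //; first by rewrite /P; field.
move=> j /andP[_ js]; rewrite /u0 /P natrB ?(ltnW js) // (expr_split h (ltnW js)) -/S.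
by field.
Qed.

Lemma conv_u0_conv_u0_u0 s : (1 <= s)%N -> conv u0 (conv u0 u0) s =
  (s%:R - 2) * (s%:R - 1) * (s%:R + 1) * (s%:R + 5) * (s%:R + 12) / 120 * h ^+ s.
Proof.
move=> s1; set S : R := s%:R.
pose P x := (- 4*x^+5 + 15*x^+4*S + 35*x^+4 - 20*x^+3*S^+2 - 90*x^+3*S - 10*x^+3
  + 10*x^+2*S^+3 + 60*x^+2*S^+2 - 25*x^+2*S - 95*x^+2 + 10*x*S^+3 + 80*x*S^+2
  + 80*x*S - 46*x) / 120.
rewrite {1}/conv (telescope_sumr_eq (fun j => P j%:R * h ^+ s)) //; first by rewrite /P; field.
move=> j /andP[_ js]; rewrite conv_u0_u0 ?subn_gt0 //.
rewrite /u0 /P natrB ?(ltnW js) // (expr_split h (ltnW js)) -/S.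
by field.
Qed.

Lemma wconv_u0_u0 n : (1 <= n)%N -> wconv n u0 u0 =
  n%:R * (n%:R - 2) * (n%:R - 1) * (n%:R + 1) * (n%:R + 12) / 30 * h ^+ n.
Proof.
move=> n1; set S : R := n%:R.
pose P x := (- 24*x^+5 + 60*x^+4*S + 60*x^+4 - 50*x^+3*S^+2 - 80*x^+3*S
  + 15*x^+2*S^+3 + 15*x^+2*S^+2 - 60*x^+2*S - 60*x^+2 + 15*x*S^+3 + 65*x*S^+2
  + 80*x*S + 24*x) / 30.
rewrite /wconv (telescope_sumr_eq (fun j => P j%:R * h ^+ n)) //; first by rewrite /P; field.
move=> j /andP[_ jn].
rewrite /u0 /weight /P natrB ?(ltnW jn) // (expr_split h (ltnW jn)) -/S.
by field.
Qed.

Lemma conv_u1_gen_u0 s : (1 <= s)%N -> conv u1_gen u0 s =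
  - (61 / 144) * ((s%:R - 1) * (s%:R + 1) * (s%:R + 2) * (s%:R + 6) / 12) * h ^+ s.
Proof.
move=> s1; set S : R := s%:R.
pose P x := - (61 / 144) * ((- 3*x^+4 + 4*x^+3*S + 2*x^+3 + 6*x^+2*S + 9*x^+2
  + 2*x*S + 4*x) / 12).
rewrite /conv (telescope_sumr_eq (fun j => P j%:R * h ^+ s)) //; first by rewrite /P; field.
move=> j /andP[_ js].
rewrite /u0 /u1_gen /P natrB ?(ltnW js) // (expr_split h (ltnW js)) -/S.
by field.
Qed.

Lemma conv_u1_gen_conv_u0_u0 s : (1 <= s)%N -> conv u1_gen (conv u0 u0) s =
  - (61 / 144) * ((s%:R - 2) * (s%:R - 1) * (s%:R + 1) * (s%:R + 3) * (s%:R + 5)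
                  * (s%:R + 12) / 360) * h ^+ s.
Proof.
move=> s1; set S : R := s%:R.
pose P x := - (61 / 144) * ((- 10*x^+6 + 36*x^+5*S + 78*x^+5 - 45*x^+4*S^+2
  - 180*x^+4*S + 35*x^+4 + 20*x^+3*S^+3 + 90*x^+3*S^+2 - 200*x^+3*S - 240*x^+3
  + 30*x^+2*S^+3 + 225*x^+2*S^+2 + 150*x^+2*S - 205*x^+2 + 10*x*S^+3 + 90*x*S^+2
  + 134*x*S - 18*x) / 360).
rewrite {1}/conv (telescope_sumr_eq (fun j => P j%:R * h ^+ s)) //; first by rewrite /P; field.
move=> j /andP[_ js]; rewrite conv_u0_u0 ?subn_gt0 //.
rewrite /u1_gen /P natrB ?(ltnW js) // (expr_split h (ltnW js)) -/S.
by field.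
Qed.

Lemma wconv_u1_gen_u0 n : (1 <= n)%N -> wconv n u1_gen u0 =
  - (61 / 144) * (n%:R * (n%:R - 2) * (n%:R - 1) * (n%:R + 1) * (n%:R + 2)
                  * (n%:R + 12) / 60) * h ^+ n.
Proof.
move=> n1; set S : R := n%:R.
pose P x := - (61 / 144) * ((- 40*x^+6 + 96*x^+5*S + 72*x^+5 - 75*x^+4*S^+2
  - 60*x^+4*S + 80*x^+4 + 20*x^+3*S^+3 - 30*x^+3*S^+2 - 200*x^+3*S - 120*x^+3
  + 30*x^+2*S^+3 + 105*x^+2*S^+2 + 60*x^+2*S - 40*x^+2 + 10*x*S^+3 + 60*x*S^+2
  + 104*x*S + 48*x) / 60).
rewrite /wconv (telescope_sumr_eq (fun j => P j%:R * h ^+ n)) //; first by rewrite /P; field.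
move=> j /andP[_ jn].
rewrite /u0 /u1_gen /weight /P natrB ?(ltnW jn) // (expr_split h (ltnW jn)) -/S.
by field.
Qed.

Lemma rhs_u0 n : (2 <= n)%N -> rhs n u0 = (n ^ 2)%:R * u0 n.
Proof.
case: n => [|m] // m1; rewrite /rhs /= conv_u0_u0 // conv_u0_conv_u0_u0 //.
rewrite wconv_u0_u0 // /u0 natrX (exprS h m); move: (h ^+ m) => hm.
by rewrite -[m.+1]addn1 natrD /h; field.
Qed.

Lemma u1_gen_eq n : (3 <= n)%N -> u1 n = u1_gen n.
Proof.
case: n => [|[|[|n]]] // _; rewrite /u1 /u1_gen /=.
by rewrite natrX exprVn; field; rewrite expf_neq0 // pnatr_eq0.
Qed.

Lemma sum_u1 s (F : nat -> R) : (3 <= s)%N ->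
  \sum_(1 <= j < s) u1 j * F j = \sum_(1 <= j < s) u1_gen j * F j
    + (u1 1 - u1_gen 1) * F 1%N + (u1 2 - u1_gen 2) * F 2%N.
Proof.
move=> s3; rewrite !(big_ltn (_ : 1 < s)%N) 1?ltnW // !(big_ltn (_ : 2 < s)%N) //.
rewrite (eq_big_nat _ _ (F2 := fun j => u1_gen j * F j)); first ring.
by move=> j /andP[j3 _]; rewrite u1_gen_eq.
Qed.

Lemma conv_u1 g s : (3 <= s)%N -> conv u1 g s = conv u1_gen g s
  + (u1 1 - u1_gen 1) * g (s - 1)%N + (u1 2 - u1_gen 2) * g (s - 2)%N.
Proof. exact: sum_u1. Qed.

Lemma wconv_u1 n g : (3 <= n)%N -> wconv n u1 g = wconv n u1_gen g
  + (u1 1 - u1_gen 1) * (weight R n 1 * g (n - 1)%N)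
  + (u1 2 - u1_gen 2) * (weight R n 2 * g (n - 2)%N).
Proof. exact: sum_u1. Qed.

Lemma drhs_u0_u1 n : (2 <= n)%N -> drhs n u0 u1 = u0 n + (n ^ 2)%:R * u1 n.
Proof.
rewrite drhsE; case: n => [|[|[|[|k]]]] // _.
- by rewrite /conv /wconv /= unlock /= /u0 /u1 /weight /h /= !subSS !subn0 natrX; field.
- by rewrite /conv /wconv /= unlock /= /u0 /u1 /weight /h /= !subSS !subn0 !natrX; field.
rewrite /= conv_u1 // conv_u1 // wconv_u1 // conv_u1_gen_u0 // conv_u1_gen_conv_u0_u0 //.
rewrite wconv_u1_gen_u0 // (@u1_gen_eq k.+3) // (@u1_gen_eq k.+4) // !subSS !subn0.
rewrite !conv_u0_u0 // /u0 /u1_gen /weight natrX !(exprS h); move: (h ^+ k) => hk.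
rewrite -[k.+4]addn4 -[k.+3]addn3 -[k.+2]addn2 -[k.+1]addn1 !natrD /u1 /h /=.
by field.
Qed.

Lemma has_expansion_u n :
  (0 < n)%N -> has_expansion (u (R:=R) n) (u0 n) (u1 n).
Proof.
elim/ltn_ind: n => -[//|[_ _|n IH _]].
  apply: (eq_has_expansion _ (has_expansion_div_sqrD ltr01 _ _ (has_expansion_cst 1))).
  - by move=> a; rewrite u_base mul1r.
  - by rewrite /u0 /h; field.
  - by rewrite /u0 /u1 /h /=; field.
have n2 : (2 <= n.+2)%N by [].
have hu j : (0 < j < n.+2)%N -> has_expansion (u (R:=R) j) (u0 j) (u1 j).
  by case/andP=> j0 jn; exact: IH.
have hrhs := has_expansion_rhs n2 hu.
have m0 : (0 : R) < (n.+2 ^ 2)%:R by rewrite ltr0n expn_gt0.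
have := has_expansion_div_sqrD m0 (rhs_u0 n2) (drhs_u0_u1 n2) hrhs.
by apply: eq_has_expansion => a; rewrite u_rec.
Qed.

End Coefficients.

Unset Implicit Arguments.

Theorem proposition11 (R : realFieldType) :
  a2_coeff (u (R:=R) 1) (-1) /\
  a2_coeff (u (R:=R) 2) (- (15%:R / 16%:R)) /\
  (forall n : nat, (3 <= n)%N ->
     a2_coeff (u (R:=R) n)
       (- (61%:R / (12%:R ^+ 2)) * ((n + 1)%N ^ 2)%:R / (2%:R ^+ n))).
Proof.
have a2_coeff_u n : (0 < n)%N -> a2_coeff (u (R:=R) n) (u1 R n).
  move=> n0; have [c2 [C [d hd]]] := has_expansion_u R n0.
  by exists (u0 R n), c2, C, d.
split; first exact: a2_coeff_u.
split; first exact: a2_coeff_u.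
by case=> [|[|[|n]]] // _; apply: a2_coeff_u.
Qed.
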